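(* Let $q$ be a prime power and $u=(u_1,u_2,u_3)\in\mathbb{F}_q^3$. (1) If $\omega(u)=1$ and $\delta(u)=2$, then $|\widetilde{E}(u)|=0$. (2) If $\omega(u)=2$ and $\delta(u)=2$, then $|\widetilde{E}(u)|=0$. (3) If $\omega(u)=2$ and $\delta(u)=3$, then $|\widetilde{E}(u)|=(q-1)(q-3)$. (4) If $\omega(u)=3$ and $\delta(u)=1$, then $|\widetilde{E}(u)|=0$. (5) If $\omega(u)=3$ and $\delta(u)=2$, then $|\widetilde{E}(u)|=(q-1)(2q-6)$. (6) If $\omega(u)=3$ and $\delta(u)=3$, then $|\widetilde{E}(u)|=(q-1)(3q-11)$.
   Context: $\mathbb{F}_q$ is the finite field with $q$ elements. Hamming distance $d(u,v)=|\{i: u_i\ne v_i\}|$ on $\mathbb{F}_q^3$; $B(u)=\{v: d(u,v)\le1\}$; $E(u)=\bigcup_{\lambda\in\mathbb{F}_q}B(\lambda u)$. $\mathcal{D}_q=\{(u_1,u_2,u_3)\in\mathbb{F}_q^3 : u_1,u_2,u_3 \text{ pairwise distinct and nonzero}\}$ and $\widetilde{E}(u)=E(u)\cap\mathcal{D}_q$. The weight is $\omega(u)=|\{i: u_i\neq 0\}|$ and $\delta(u)=|\{u_1,u_2,u_3\}|$ is the number of distinct coordinate values. *)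

From HB Require Import structures.
From mathcomp Require Import all_boot all_order all_algebra all_field.
Set Implicit Arguments. Unset Strict Implicit. Unset Printing Implicit Defensive.
Import GRing.Theory.
Local Open Scope ring_scope.

Section Defs.
Variable F : finFieldType.
Definition vec3 := {ffun 'I_3 -> F}.

Definition hdist (u v : vec3) : nat := #|[set i : 'I_3 | u i != v i]|.
Definition hball (u : vec3) : {set vec3} := [set v : vec3 | (hdist u v <= 1)%N].
Definition vscale (l : F) (u : vec3) : vec3 := [ffun i => l * u i].
Definition Eset (u : vec3) : {set vec3} := \bigcup_(l : F) hball (vscale l u).
Definition Dq : {set vec3} :=
  [set u : vec3 | [forall i, u i != 0] &&
                  [forall i, forall j, (i != j) ==> (u i != u j)]].
Definition Etilde (u : vec3) : {set vec3} := Eset u :&: Dq.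
Definition weight (u : vec3) : nat := #|[set i : 'I_3 | u i != 0]|.
Definition ndistinct (u : vec3) : nat := #|[set u i | i : 'I_3]|.
End Defs.

(* Ẽ(u) is the union of the three sets Eoff i of vectors v ∈ D_q agreeing with some
   multiple λu outside coordinate i.  Two of them meet exactly in the multiples of u
   lying in D_q, since a coordinate outside both i and j pins down λ; by
   inclusion-exclusion |Ẽ(u)| = Σ_i |Eoff i| - 2|{λu ∈ D_q}|.  Writing
   v = λ·u[i := y] identifies Eoff i with pairs (λ ≠ 0, y ∉ {0, u_j, u_k}) when u_j, u_k
   are nonzero and distinct, and Eoff i is empty otherwise.  Hence
   |Ẽ(u)| = N (q-1)(q-3) - 2 [N = 3] (q-1), where N counts the pairs of coordinates
   of u that are nonzero and distinct, and N is determined by ω(u) and δ(u). *)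

From HB Require Import structures.
From mathcomp Require Import all_boot all_order all_algebra.
From mathcomp Require Import zify ring.
Set Implicit Arguments.
Unset Strict Implicit.
Unset Printing Implicit Defensive.
Import GRing.Theory.
Local Open Scope ring_scope.

Definition i0 : 'I_3 := ord0.
Definition i1 : 'I_3 := lift ord0 ord0.
Definition i2 : 'I_3 := lift ord0 (lift ord0 ord0).

Lemma i01 : i0 != i1. Proof. by []. Qed.
Lemma i02 : i0 != i2. Proof. by []. Qed.
Lemma i12 : i1 != i2. Proof. by []. Qed.

Lemma ord3_cover (i j k : 'I_3) :
  i != j -> i != k -> j != k -> forall t, [|| t == i, t == j | t == k].
Proof.
by case: i j k => [[|[|[|?]]] ?] [[|[|[|?]]] ?] [[|[|[|?]]] ?] // _ _ _ [[|[|[|?]]] ?].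
Qed.

Lemma ord3_other (i j : 'I_3) : i != j -> exists2 t, t != i & t != j.
Proof.
case: i j => [[|[|[|?]]] ?] [[|[|[|?]]] ?] // _.
all: first [by exists i0 | by exists i1 | by exists i2].
Qed.

Lemma big_ord3 (R : Type) (idx : R) (op : R -> R -> R) (f : 'I_3 -> R) :
  \big[op/idx]_(i < 3) f i = op (f i0) (op (f i1) (op (f i2) idx)).
Proof. by rewrite !big_ord_recl big_ord0. Qed.

Lemma card_ord3_set (P : pred 'I_3) : #|[set i | P i]| = (P i0 + P i1 + P i2)%N.
Proof.
by rewrite -sum1_card big_mkcond big_ord3 /= !inE addn0 addnA; do 3!case: (P _).
Qed.

Lemma bigcup_ord3 (T : finType) (A : 'I_3 -> {set T}) :
  \bigcup_i A i = A i0 :|: A i1 :|: A i2.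
Proof. by rewrite big_ord3 setU0 setUA. Qed.

Lemma cardsCz (T : finType) (A : {set T}) : #|~: A|%:Z = #|T|%:Z - #|A|%:Z.
Proof. by rewrite -(cardsC A) PoszD addrAC subrr add0r. Qed.

Lemma cards3 (T : finType) (a b c : T) :
  #|[set a; b; c]| = (~~ ((a == b) || (a == c)) + (b != c).+1)%N.
Proof. by rewrite -setUA cardsU1 cards2 in_set2. Qed.

Lemma exists_neq_ord n (i : 'I_n.+2) : exists t, t != i.
Proof. by exists (lift i ord0); rewrite eq_sym neq_lift. Qed.

Section Coordinates.
Variable F : finFieldType.
Implicit Types (v w : vec3 F) (l x y : F).

Definition nz_distinct x y : bool := [&& x != 0, y != 0 & x != y].

Lemma Dq_neq0 v t : v \in Dq F -> v t != 0.
Proof. by rewrite inE => /andP[/forallP]. Qed.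

Lemma nz_distinct_scale l x y :
  nz_distinct (l * x) (l * y) = (l != 0) && nz_distinct x y.
Proof.
rewrite /nz_distinct; have [->|l0] := eqVneq l 0; first by rewrite !mul0r eqxx.
by rewrite !mulf_eq0 (negbTE l0) (inj_eq (mulfI l0)).
Qed.

Lemma DqE (i j k : 'I_3) v : i != j -> i != k -> j != k ->
  (v \in Dq F) =
  [&& nz_distinct (v i) (v j), nz_distinct (v i) (v k) & nz_distinct (v j) (v k)].
Proof.
move=> ij ik jk; rewrite inE /nz_distinct; apply/andP/idP.
  case=> /forallP nz /forallP dist; rewrite !nz !(implyP (forallP (dist _) _)) //.
case/and3P=> /and3P[vi vj ij'] /and3P[_ vk ik'] /and3P[_ _ jk']; split.
  by apply/forallP=> t; case/or3P: (ord3_cover ij ik jk t) => /eqP->.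
apply/forallP=> t; apply/forallP=> s; apply/implyP.
by case/or3P: (ord3_cover ij ik jk t) => /eqP->;
  case/or3P: (ord3_cover ij ik jk s) => /eqP->; rewrite ?eqxx // => _; rewrite eq_sym.
Qed.

Lemma Dq_scale l v : (vscale l v \in Dq F) = (l != 0) && (v \in Dq F).
Proof.
rewrite !(DqE _ i01 i02 i12) !ffunE !nz_distinct_scale.
by case: (l != 0).
Qed.

Definition vupd v (i : 'I_3) y : vec3 F := [ffun t => if t == i then y else v t].

Lemma Dq_vupd (i j k : 'I_3) v y : i != j -> i != k -> j != k ->
  (vupd v i y \in Dq F) =
  [&& nz_distinct y (v j), nz_distinct y (v k) & nz_distinct (v j) (v k)].
Proof.
move=> ij ik jk; rewrite (DqE _ ij ik jk) !ffunE eqxx.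
by rewrite eq_sym (negbTE ij) eq_sym (negbTE ik).
Qed.

Definition agree_off (i : 'I_3) v w : bool := [forall t, (t != i) ==> (v t == w t)].

Lemma agree_offP (i : 'I_3) v w :
  reflect (forall t, t != i -> v t = w t) (agree_off i v w).
Proof.
apply: (iffP forallP) => agree t; last by apply/implyP=> /agree->.
by move=> ti; apply/eqP/(implyP (agree t)).
Qed.

Lemma hball_agree_off w v : (v \in hball w) = [exists i, agree_off i v w].
Proof.
rewrite inE /hdist; set S := [set _ | _]; apply/idP/existsP.
  have off_S t : t \notin S -> v t = w t by rewrite inE negbK => /eqP.
  rewrite leq_eqVlt ltnS leqn0; case/orP=> [/cards1P[i Si] | /eqP/cards0_eq S0].
    by exists i; apply/agree_offP=> t ti; rewrite off_S // Si in_set1.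
  by exists i0; apply/agree_offP=> t _; rewrite off_S // S0 in_set0.
case=> i /agree_offP agree; rewrite -[X in (_ <= X)%N](cards1 i) subset_leq_card //.
apply/subsetP=> t; rewrite !inE; apply: contraR => ti.
by rewrite (agree t ti).
Qed.

Lemma weightE v : weight v = ((v i0 != 0%R) + (v i1 != 0%R) + (v i2 != 0%R))%N.
Proof. exact: card_ord3_set. Qed.

Lemma ndistinctE v : ndistinct v = #|[set v i0; v i1; v i2]|.
Proof.
rewrite /ndistinct; congr #|pred_of_set _|.
apply/setP=> x; rewrite !inE; apply/imsetP/idP=> [[i _ ->] | ].
  by case/or3P: (ord3_cover i01 i02 i12 i) => /eqP->; rewrite eqxx ?orbT.
by case/orP=> [/orP[] |] /eqP->; [exists i0 | exists i1 | exists i2].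
Qed.

End Coordinates.

Section Counting.
Variables (F : finFieldType) (u : vec3 F).

Definition Eoff (i : 'I_3) : {set vec3 F} :=
  [set v in Dq F | [exists l, agree_off i v (vscale l u)]].

Lemma mem_Eoff i v :
  (v \in Eoff i) = (v \in Dq F) && [exists l, agree_off i v (vscale l u)].
Proof. by rewrite inE. Qed.

Definition Dmultiples : {set vec3 F} := Dq F :&: [set vscale l u | l : F].

Lemma Etilde_Eoff : Etilde u = \bigcup_i Eoff i.
Proof.
apply/setP=> v; rewrite in_setI andbC; apply/andP/bigcupP.
  case=> Dv /bigcupP[l _]; rewrite hball_agree_off => /existsP[i off_i].
  by exists i; rewrite // mem_Eoff Dv; apply/existsP; exists l.
case=> i _; rewrite mem_Eoff => /andP[Dv /existsP[l off_i]]; split=> //.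
by apply/bigcupP; exists l; rewrite // hball_agree_off; apply/existsP; exists i.
Qed.

Lemma EoffI (i j : 'I_3) : i != j -> Eoff i :&: Eoff j = Dmultiples.
Proof.
move=> ij; apply/setP=> v; rewrite !in_setI !mem_Eoff.
apply/andP/andP=> [[/andP[Dv /existsP[l /agree_offP off_i]]] | [Dv /imsetP[l _ vE]]].
  case/andP=> _ /existsP[l' /agree_offP off_j]; split=> //; apply/imsetP; exists l => //.
  have [t ti tj] := ord3_other ij.
  have ut0 : u t != 0.
    by apply: contraNneq (Dq_neq0 t Dv) => ut0; rewrite off_i // ffunE ut0 mulr0.
  have ll' : l = l'.
    by apply: (mulIf ut0); move: (off_i t ti) (off_j t tj); rewrite !ffunE => <-.
  rewrite -ll' in off_j.
  by apply/ffunP=> s; have [->|si] := eqVneq s i; [exact: off_j | exact: off_i].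
by subst v; rewrite Dv; split; apply/existsP; exists l; apply/agree_offP.
Qed.

Lemma card_Dmultiples : #|Dmultiples|%:Z = (u \in Dq F)%:Z * (#|F|%:Z - 1).
Proof.
have [Du | nDu] := boolP (u \in Dq F); last first.
  rewrite mul0r; apply/eqP; rewrite eqz_nat cards_eq0; apply/eqP/setP=> v.
  rewrite in_setI in_set0; apply/negbTE/andP=> [[Dv /imsetP[l _ vE]]].
  by move: Dv; rewrite vE Dq_scale (negbTE nDu) andbF.
have -> : Dmultiples = [set vscale l u | l in [set~ 0]].
  apply/setP=> v; rewrite in_setI.
  apply/andP/imsetP=> [[Dv /imsetP[l _ vE]] | [l l0 vE]].
    by subst v; exists l => //; move: Dv; rewrite Dq_scale in_setC1 => /andP[].
  by subst v; rewrite Dq_scale Du -in_setC1 l0; split=> //; apply/imsetP; exists l.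
rewrite card_imset ?cardsCz ?cards1 ?mul1r // => l l' /ffunP/(_ i0).
by rewrite !ffunE; apply: mulIf; exact: Dq_neq0.
Qed.

Lemma Eoff_imset i : Eoff i =
  [set vscale l (vupd u i y) | l in [set~ 0], y in [set y | vupd u i y \in Dq F]].
Proof.
apply/setP=> v; rewrite mem_Eoff.
apply/andP/imset2P=> [[Dv /existsP[l /agree_offP off_i]] | ].
  have [t ti] := exists_neq_ord i.
  have l0 : l != 0.
    by apply: contraNneq (Dq_neq0 t Dv) => l0; rewrite off_i // ffunE l0 mul0r.
  have vE : v = vscale l (vupd u i (v i / l)).
    apply/ffunP=> s; rewrite !ffunE; have [->|si] := eqVneq s i.
      by rewrite mulrC divfK.
    by rewrite off_i // ffunE.
  exists l (v i / l); rewrite ?in_setC1 // in_set.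
  by move: Dv; rewrite {1}vE Dq_scale => /andP[].
case=> l y; rewrite in_setC1 => l0; rewrite in_set => Dy ->.
split; first by rewrite Dq_scale l0 Dy.
by apply/existsP; exists l; apply/agree_offP=> t ti; rewrite !ffunE (negbTE ti).
Qed.

Lemma card_Eoff_vupd i :
  #|Eoff i|%:Z = (#|F|%:Z - 1) * #|[set y | vupd u i y \in Dq F]|%:Z.
Proof.
rewrite Eoff_imset curry_imset2X card_in_imset ?cardsX ?PoszM ?cardsCz ?cards1 //.
move=> [l y] [l' y']; rewrite !in_setX in_setC1 /= => /andP[l0 Dy] _ E.
rewrite in_set in Dy.
have [t ti] := exists_neq_ord i.
have ut0 : u t != 0 by move: (Dq_neq0 t Dy); rewrite ffunE (negbTE ti).
have ll' : l = l'.
  by apply: (mulIf ut0); move/ffunP/(_ t): E; rewrite !ffunE (negbTE ti).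
by subst l'; move/ffunP/(_ i): E; rewrite !ffunE eqxx => /(mulfI l0) ->.
Qed.

Lemma card_vupd_Dq (i j k : 'I_3) : i != j -> i != k -> j != k ->
  #|[set y | vupd u i y \in Dq F]|%:Z = (nz_distinct (u j) (u k))%:Z * (#|F|%:Z - 3).
Proof.
move=> ij ik jk.
have [/and3P[uj0 uk0 ujk] | njk] := boolP (nz_distinct (u j) (u k)); last first.
  rewrite mul0r; apply/eqP; rewrite eqz_nat cards_eq0; apply/eqP/setP=> y.
  by rewrite in_set in_set0 (Dq_vupd _ _ ij ik jk) (negbTE njk) !andbF.
have -> : [set y | vupd u i y \in Dq F] = ~: [set 0; u j; u k].
  apply/setP=> y; rewrite in_set (Dq_vupd _ _ ij ik jk) in_setC !in_setU !in_set1.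
  rewrite /nz_distinct ujk uj0 uk0.
  by case: (y == 0); case: (y == u j); case: (y == u k).
rewrite (cardsCz [set 0; u j; u k]) cards3 !(eq_sym 0).
by rewrite (negbTE uj0) (negbTE uk0) ujk mul1r.
Qed.

Lemma card_Eoff (i j k : 'I_3) : i != j -> i != k -> j != k ->
  #|Eoff i|%:Z = (nz_distinct (u j) (u k))%:Z * ((#|F|%:Z - 1) * (#|F|%:Z - 3)).
Proof. by move=> ij ik jk; rewrite card_Eoff_vupd (card_vupd_Dq ij ik jk) mulrCA. Qed.

Lemma card_Etilde_incl_excl :
  #|Etilde u|%:Z = #|Eoff i0|%:Z + #|Eoff i1|%:Z + #|Eoff i2|%:Z - 2 * #|Dmultiples|%:Z.
Proof.
have UI01 := cardsUI (Eoff i0) (Eoff i1).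
have UI := cardsUI (Eoff i0 :|: Eoff i1) (Eoff i2).
rewrite setIUl !EoffI // setUid in UI; rewrite EoffI // in UI01.
by rewrite Etilde_Eoff bigcup_ord3; lia.
Qed.

Definition nz_distinct_pairs : nat :=
  nz_distinct (u i0) (u i1) + nz_distinct (u i0) (u i2) + nz_distinct (u i1) (u i2).

Lemma card_Etilde : #|Etilde u|%:Z =
  nz_distinct_pairs%:Z * ((#|F|%:Z - 1) * (#|F|%:Z - 3))
  - 2 * (nz_distinct_pairs == 3)%:Z * (#|F|%:Z - 1).
Proof.
rewrite card_Etilde_incl_excl card_Dmultiples (DqE _ i01 i02 i12).
rewrite (card_Eoff i01 i02 i12) (@card_Eoff i1 i0 i2) // (@card_Eoff i2 i0 i1) //.
rewrite /nz_distinct_pairs.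
by case: (nz_distinct (u i0) (u i1)); case: (nz_distinct (u i0) (u i2));
  case: (nz_distinct (u i1) (u i2)) => /=; ring.
Qed.

Lemma nz_distinct_pairs_weight_ndistinct : nz_distinct_pairs =
  match weight u, ndistinct u with 2, 3 => 1 | 3, 2 => 2 | 3, 3 => 3 | _, _ => 0 end%N.
Proof.
rewrite weightE ndistinctE cards3 /nz_distinct_pairs /nz_distinct.
move: (u i0) (u i1) (u i2) => a b c.
have [? | ?] := eqVneq a 0; have [? | ?] := eqVneq b 0; have [? | ?] := eqVneq c 0; subst.
all: try (have [? | ?] := eqVneq a b; subst); try (have [? | ?] := eqVneq a c; subst);
  try (have [? | ?] := eqVneq b c; subst).
all: repeat match goal with
  | h : is_true (?x != ?y) |- context [?x == ?y] => rewrite (negbTE h)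
  | h : is_true (?x != ?y) |- context [?y == ?x] => rewrite [y == x]eq_sym (negbTE h)
  end.
all: try match goal with h : is_true (?x != ?x) |- _ => by rewrite eqxx in h end.
all: by rewrite ?eqxx.
Qed.

End Counting.

Theorem theorem5 (F : finFieldType) (u : vec3 F) :
  let q : int := (#|F|)%:Z in
  let e : int := (#|Etilde u|)%:Z in
  ((weight u = 1)%N -> (ndistinct u = 2)%N -> e = 0) /\
  ((weight u = 2)%N -> (ndistinct u = 2)%N -> e = 0) /\
  ((weight u = 2)%N -> (ndistinct u = 3)%N -> e = (q - 1) * (q - 3)) /\
  ((weight u = 3)%N -> (ndistinct u = 1)%N -> e = 0) /\
  ((weight u = 3)%N -> (ndistinct u = 2)%N -> e = (q - 1) * (2 * q - 6)) /\
  ((weight u = 3)%N -> (ndistinct u = 3)%N -> e = (q - 1) * (3 * q - 11)).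
Proof.
rewrite /= card_Etilde nz_distinct_pairs_weight_ndistinct.
by split; [|split; [|split; [|split; [|split]]]] => -> nd; rewrite ?nd /=; ring.
Qed.
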